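(* Let $G=(N,A)$ be an $s$-$t$ DAG (parallel arcs allowed) and let $uv\in A$. Then $uv$ is an $s$-dominator if and only if $d^+_v\ge 1$ and $d^-_v=1$; and $uv$ is a $t$-dominator if and only if $d^-_u\ge 1$ and $d^+_u=1$.
   Context: An $s$-$t$ DAG is a directed acyclic multigraph with a unique source $s$ and a unique sink $t$ such that every node is reachable from $s$ and every node reaches $t$. $d^-_v$ and $d^+_v$ denote the indegree and outdegree of $v$ (counting parallel arcs). An arc $ab$ $s$-dominates an arc $xy$ if $ab=xy$ or every $s$-$x$ path contains $ab$; $ab$ $t$-dominates $xy$ if $ab=xy$ or every $y$-$t$ path contains $ab$. An arc is an $s$-dominator (resp. $t$-dominator) if it $s$-dominates (resp. $t$-dominates) some arc different from itself. *)

(* A directed multigraph is given by a finite node type N,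
   a finite arc type A and endpoint maps src tgt : A -> N (parallel arcs allowed). *)
From mathcomp Require Import all_boot.
Set Implicit Arguments. Unset Strict Implicit. Unset Printing Implicit Defensive.

Section Digraph.
Variables (N A : finType) (src tgt : A -> N).

Fixpoint walk (x : N) (p : seq A) (y : N) : bool :=
  match p with
  | [::] => x == y
  | a :: q => (src a == x) && walk (tgt a) q y
  end.

Definition indeg (v : N) : nat := #|[set a | tgt a == v]|.
Definition outdeg (v : N) : nat := #|[set a | src a == v]|.

Definition acyclic : Prop := forall x p, walk x p x -> p = [::].

Definition st_dag (s t : N) : Prop :=
  [/\ acyclic,
      forall v, indeg v = 0 <-> v = s,
      forall v, outdeg v = 0 <-> v = t,
      forall v, exists p, walk s p v &
      forall v, exists p, walk v p t].

Definition s_dominates (s : N) (ab xy : A) : Prop :=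
  ab = xy \/ forall p, walk s p (src xy) -> ab \in p.
Definition t_dominates (t : N) (ab xy : A) : Prop :=
  ab = xy \/ forall p, walk (tgt xy) p t -> ab \in p.

Definition s_dominator (s : N) (ab : A) : Prop :=
  exists xy, xy <> ab /\ s_dominates s ab xy.
Definition t_dominator (t : N) (ab : A) : Prop :=
  exists xy, xy <> ab /\ t_dominates t ab xy.

End Digraph.

(* In a DAG a walk never enters the same node twice.  If uv
   s-dominates some other arc xy, extend the s-v part of a walk through uv by
   any other arc a entering v: the result is still an s-(src xy) walk, so it
   contains uv, and both a and uv enter v, whence a = uv; the arc of the walk
   after uv (or xy itself) leaves v.  Conversely, if uv is the only arc
   entering v <> s and xy leaves v, every s-v walk ends with uv.  The statement
   for t-dominators is the same one in the reversed DAG. *)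
From mathcomp Require Import all_boot.
Set Implicit Arguments. Unset Strict Implicit. Unset Printing Implicit Defensive.

Section Walks.
Variables (N A : finType) (src tgt : A -> N).

Lemma walk_cat x p q y z :
  walk src tgt x p y -> walk src tgt y q z -> walk src tgt x (p ++ q) z.
Proof.
elim: p x => [|a p IHp] x /=; first by move/eqP->.
by case/andP=> -> /IHp Wq /Wq ->.
Qed.

Lemma walk_split x p q z :
  walk src tgt x (p ++ q) z -> exists2 y, walk src tgt x p y & walk src tgt y q z.
Proof.
elim: p x => [|a p IHp] x /=; first by exists x; rewrite ?eqxx.
by case/andP=> /eqP <- /IHp [y Wp Wq]; exists y; rewrite ?eqxx.
Qed.

End Walks.

Lemma walk_rev (N A : finType) (src tgt : A -> N) x p y :
  walk src tgt x p y -> walk tgt src y (rev p) x.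
Proof.
elim: p x => [|a p IHp] x /=; first by move/eqP->.
case/andP=> /eqP <- /IHp Wp; rewrite rev_cons -cats1.
by apply: walk_cat Wp _; rewrite /= !eqxx.
Qed.

Section Digraph.
Variables (N A : finType) (src tgt : A -> N).

Lemma walk_outdeg_gt0 x p y :
  walk src tgt x p y -> p != [::] -> 0 < outdeg src x.
Proof.
case: p => [|a p] //= /andP[/eqP src_a _] _.
by rewrite card_gt0; apply/set0Pn; exists a; rewrite inE src_a.
Qed.

Lemma walk_entering_arc x p y :
  x != y -> walk src tgt x p y -> exists2 a, a \in p & tgt a = y.
Proof.
elim: p x => [|a p IHp] x /=; first by move=> /negbTE->.
move=> _ /andP[_ Wp]; have [tgt_a | tgt_a_y] := eqVneq (tgt a) y.
  by exists a; rewrite ?mem_head.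
by case: (IHp _ tgt_a_y Wp) => b b_p tgt_b; exists b; rewrite // inE b_p orbT.
Qed.

Lemma indeg1_entering_arc (v : N) (a b : A) :
  indeg tgt v = 1 -> tgt a = v -> tgt b = v -> a = b.
Proof.
move=> indeg_v tgt_a tgt_b.
have /card_le1_eqP : #|[set c | tgt c == v]| <= 1 by rewrite -/(indeg tgt v) indeg_v.
by apply; rewrite inE ?tgt_a ?tgt_b.
Qed.

Section Acyclic.
Hypothesis acyc : acyclic src tgt.

Lemma walk_tgt_neq_start x p y a :
  walk src tgt x p y -> a \in p -> tgt a != x.
Proof.
move=> Wp a_p; case/splitPr: a_p Wp => p1 p2 /walk_split[z Wp1 /= /andP[/eqP src_a _]].
apply/eqP=> tgt_a; have Wcycle : walk src tgt x (p1 ++ [:: a]) x.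
  by apply: walk_cat Wp1 _; rewrite /= src_a tgt_a !eqxx.
by have := acyc Wcycle; case: p1 {Wp1 Wcycle}.
Qed.

Lemma src_neq_tgt a : src a != tgt a.
Proof.
rewrite eq_sym; apply: (@walk_tgt_neq_start _ [:: a] (tgt a)); last exact: mem_head.
by rewrite /= !eqxx.
Qed.

Lemma walk_tgt_inj x p y : walk src tgt x p y -> {in p &, injective tgt}.
Proof.
elim: p x => [|a p IHp] x //= /andP[_ Wp] b c.
have tgt_neq_a d : d \in p -> tgt d != tgt a by apply: walk_tgt_neq_start Wp.
rewrite !inE => /predU1P[-> | b_p] /predU1P[-> | c_p] // tgt_bc.
- by move: (tgt_neq_a _ c_p); rewrite tgt_bc eqxx.
- by move: (tgt_neq_a _ b_p); rewrite tgt_bc eqxx.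
- exact: IHp Wp _ _ b_p c_p tgt_bc.
Qed.

End Acyclic.

Section StDag.
Variables s t : N.
Hypothesis dag : st_dag src tgt s t.

Lemma s_dominator_degrees uv :
  s_dominator src tgt s uv -> 0 < outdeg src (tgt uv) /\ indeg tgt (tgt uv) = 1.
Proof.
case: dag => acyc _ _ reach_from_s _ [xy [xy_neq [uv_xy | dom]]].
  by case: xy_neq.
have [p Wp] := reach_from_s (src xy).
have uv_p := dom _ Wp.
case/splitPr: uv_p Wp => p1 p2 /walk_split[_ _ /= /andP[_ Wp2]].
split.
  apply: (@walk_outdeg_gt0 _ (p2 ++ [:: xy]) (tgt xy)); last by case: p2 {Wp2}.
  by apply: walk_cat Wp2 _; rewrite /= !eqxx.
apply/eqP/cards1P; exists uv; apply/setP=> a; rewrite !inE.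
apply/eqP/eqP=> [tgt_a | -> //].
have [q Wq] := reach_from_s (src a).
have Wqp2 : walk src tgt s (q ++ a :: p2) (src xy).
  by apply: walk_cat Wq _; rewrite /= tgt_a eqxx.
apply: (walk_tgt_inj acyc Wqp2) tgt_a; first by rewrite mem_cat mem_head orbT.
exact: dom.
Qed.

Lemma degrees_s_dominator uv :
  0 < outdeg src (tgt uv) -> indeg tgt (tgt uv) = 1 -> s_dominator src tgt s uv.
Proof.
case: dag => acyc indeg0 _ _ _; rewrite card_gt0 => /set0Pn[xy].
rewrite inE => /eqP src_xy indeg_v; exists xy; split.
  by move=> xy_uv; move: (src_neq_tgt acyc xy); rewrite src_xy xy_uv eqxx.
right=> p; rewrite src_xy; have s_neq_v : s != tgt uv.
  by apply/eqP=> s_v; move: indeg_v; rewrite -s_v (proj2 (indeg0 s)).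
case/(walk_entering_arc s_neq_v)=> a a_p tgt_a.
by rewrite -(indeg1_entering_arc indeg_v tgt_a erefl).
Qed.

Lemma s_dominatorE uv :
  s_dominator src tgt s uv <-> 0 < outdeg src (tgt uv) /\ indeg tgt (tgt uv) = 1.
Proof.
by split=> [|[]]; [apply: s_dominator_degrees | apply: degrees_s_dominator].
Qed.

Lemma st_dag_rev : st_dag tgt src t s.
Proof.
case: dag => acyc indeg0 outdeg0 reach_from_s reach_t; split=> // [x p Wp | v | v].
- by move: (acyc _ _ (walk_rev Wp)); case: p {Wp} => // a p; rewrite rev_cons; case: rev.
- by have [p Wp] := reach_t v; exists (rev p); apply: walk_rev.
- by have [p Wp] := reach_from_s v; exists (rev p); apply: walk_rev.
Qed.

End StDag.

Lemma t_dominator_rev t uv :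
  t_dominator src tgt t uv <-> s_dominator tgt src t uv.
Proof.
have dominatesE xy : t_dominates src tgt t uv xy <-> s_dominates tgt src t uv xy.
  split=> -[-> | dom]; [by left | right=> p Wp | by left | right=> p Wp];
    by rewrite -mem_rev; apply: dom; apply: walk_rev.
by split=> [] [xy [xy_neq /dominatesE dom]]; exists xy.
Qed.

End Digraph.

Theorem lemma5 (N A : finType) (src tgt : A -> N) (s t : N) :
  st_dag src tgt s t ->
  forall uv : A,
    (s_dominator src tgt s uv <->
       1 <= outdeg src (tgt uv) /\ indeg tgt (tgt uv) = 1) /\
    (t_dominator src tgt t uv <->
       1 <= indeg tgt (src uv) /\ outdeg src (src uv) = 1).
Proof.
move=> dag uv; split; first exact: s_dominatorE dag uv.
exact: iff_trans (t_dominator_rev src tgt t uv) (s_dominatorE (st_dag_rev dag) uv).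
Qed.
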